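(* Let $(X^n)_{n\ge1}$ be a sequence of FK-spaces containing $\phi$ and let $Y=\bigcap_nX^n$ with its intersection FK-topology. Then $E(Y)=\bigcap_nE(X^n)$ for each of $E=D_p^qS,\ D_p^qW,\ D_p^qF,\ D_p^qB$.
   Context: An FK-space is a vector subspace of the space $w$ of all complex sequences with a complete metrizable locally convex topology in which coordinate functionals are continuous; $X'$ is its continuous dual. If $X^n$ has paranorm $\rho_n$ and seminorms $(s_{nk})_k$, then $Y=\bigcap_nX^n$ is an FK-space with paranorm $\sum_n\rho_n/(2^n(1+\rho_n))$ and seminorms $(s_{nk})_{n,k}$. $\delta^j$ has $1$ in position $j$, $0$ elsewhere; $\phi=\operatorname{span}\{\delta^j\}$. $p(n)<q(n)$ are nonnegative integer sequences with $q(n)\to\infty$. For $x\in w$, $x^{(k)}=\sum_{j=1}^kx_j\delta^j$ and $T_n(x)=\frac{1}{q(n)-p(n)}\sum_{k=p(n)+1}^{q(n)}x^{(k)}$. For an FK-space $X\supseteq\phi$: $D_p^qS(X)=\{x\in X: T_n(x)\to x\text{ in }X\}$; $D_p^qW(X)=\{x\in X: f(T_n(x))\to f(x)\ \forall f\in X'\}$; $D_p^qF(X)=\{x\in X:\lim_n f(T_n(x))\text{ exists }\forall f\in X'\}$; $D_p^qB(X)=\{x\in X:\sup_n|f(T_n(x))|<\infty\ \forall f\in X'\}$. *)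

From Stdlib Require Import Reals Arith Cantor.
From Coquelicot Require Import Coquelicot.

Open Scope R_scope.

(** w : all complex sequences (0-based indexing). *)
Definition seqC := nat -> C.

Definition seq0 : seqC := fun _ => RtoC 0.
Definition seq_add (x y : seqC) : seqC := fun j => Cplus (x j) (y j).
Definition seq_opp (x : seqC) : seqC := fun j => Copp (x j).
Definition seq_sub (x y : seqC) : seqC := seq_add x (seq_opp y).
Definition seq_scal (a : C) (x : seqC) : seqC := fun j => Cmult a (x j).

Definition delta (j : nat) : seqC :=
  fun i => if Nat.eqb i j then RtoC 1 else RtoC 0.

(** A sequence space X ⊆ w together with a countable family of seminorms
    (sn k)_k defining its (metrizable, locally convex) topology. *)
Record SeqSpace := {
  mem : seqC -> Prop;
  sn  : nat -> seqC -> R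
}.

Definition sn_upto (X : SeqSpace) (k : nat) (x : seqC) : R :=
  sum_f_R0 (fun i => sn X i x) k.

(** X is an FK-space: a linear subspace of w, the sn k are seminorms on X,
    the induced topology is complete, and coordinate functionals are
    continuous (which also makes the topology Hausdorff, hence metrizable). *)
Definition is_FK (X : SeqSpace) : Prop :=
  mem X seq0 /\
  (forall x y, mem X x -> mem X y -> mem X (seq_add x y)) /\
  (forall a x, mem X x -> mem X (seq_scal a x)) /\
  (forall k x, mem X x -> 0 <= sn X k x) /\
  (forall k x y, mem X x -> mem X y ->
      sn X k (seq_add x y) <= sn X k x + sn X k y) /\
  (forall k a x, mem X x -> sn X k (seq_scal a x) = Cmod a * sn X k x) /\
  (forall j, exists k M, forall x, mem X x -> Cmod (x j) <= M * sn_upto X k x) /\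
  (forall u : nat -> seqC, (forall m, mem X (u m)) ->
     (forall k eps, 0 < eps -> exists N, forall m m', (N <= m)%nat -> (N <= m')%nat ->
          sn X k (seq_sub (u m) (u m')) < eps) ->
     exists x, mem X x /\ forall k, is_lim_seq (fun m => sn X k (seq_sub (u m) x)) 0).

(** f belongs to the continuous dual X' (f is only relevant on X). *)
Definition dual (X : SeqSpace) (f : seqC -> C) : Prop :=
  (forall x y, mem X x -> mem X y -> f (seq_add x y) = Cplus (f x) (f y)) /\
  (forall a x, mem X x -> f (seq_scal a x) = Cmult a (f x)) /\
  (exists k M, forall x, mem X x -> Cmod (f x) <= M * sn_upto X k x).

(** Y = ⋂_n X^n with the seminorms (s_{nk})_{n,k}, enumerated by Cantor's
    bijection nat -> nat * nat. *)
Definition Yint (X : nat -> SeqSpace) : SeqSpace := {|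
  mem := fun x => forall n, mem (X n) x;
  sn := fun m x => sn (X (fst (Cantor.of_nat m))) (snd (Cantor.of_nat m)) x
|}.

Definition trunc (k : nat) (x : seqC) : seqC :=
  fun j => if Nat.ltb j k then x j else RtoC 0.

Definition Tn (p q : nat -> nat) (n : nat) (x : seqC) : seqC :=
  fun j => Cmult (Cinv (RtoC (INR (q n - p n))))
                 (sum_n_m (fun k => trunc k x j) (S (p n)) (q n)).

Definition DS (p q : nat -> nat) (X : SeqSpace) (x : seqC) : Prop :=
  mem X x /\ forall k, is_lim_seq (fun n => sn X k (seq_sub (Tn p q n x) x)) 0.

Definition DW (p q : nat -> nat) (X : SeqSpace) (x : seqC) : Prop :=
  mem X x /\ forall f, dual X f ->
    is_lim_seq (fun n => Cmod (Cminus (f (Tn p q n x)) (f x))) 0.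

Definition DF (p q : nat -> nat) (X : SeqSpace) (x : seqC) : Prop :=
  mem X x /\ forall f, dual X f ->
    exists l : C, is_lim_seq (fun n => Cmod (Cminus (f (Tn p q n x)) l)) 0.

Definition DB (p q : nat -> nat) (X : SeqSpace) (x : seqC) : Prop :=
  mem X x /\ forall f, dual X f ->
    exists M : R, forall n, Cmod (f (Tn p q n x)) <= M.

From Pilot Require Import Defs.
From Stdlib Require Import Reals Arith Cantor Lra Lia.
From Stdlib Require Import Classical ClassicalEpsilon FunctionalExtensionality PropExtensionality.
From Coquelicot Require Import Coquelicot.
From mathcomp Require classical_sets.

(* A continuous functional f on Y = ⋂ X^n is dominated by finitely many of the
   seminorms s_{nk}, i.e. by a seminorm on a finite product X^{n_0} × ... × X^{n_k}
   in which Y sits diagonally.  Extending f to this product by Hahn-Banach writes it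
   as a finite sum of functionals g_i ∈ (X^{n_i})'; conversely every functional in
   some (X^n)' is continuous on Y.  Since T_n(x) ∈ φ ⊆ Y, convergence, existence of
   the limit and boundedness of f(T_n(x)) for all f ∈ Y' are therefore equivalent to
   the same properties in every X^n.  For D_p^qS the equality is immediate, Y
   carrying exactly the seminorms of all the X^n. *)

Set Implicit Arguments.
Open Scope R_scope.

(** * Hahn-Banach in subspaces of C^I *)

Section VectorSpace.
Context {I : Type}.

Definition vadd (u v : I -> C) : I -> C := fun i => Cplus (u i) (v i).
Definition vscal (a : C) (u : I -> C) : I -> C := fun i => Cmult a (u i).
Definition vzero : I -> C := fun _ => RtoC 0.

Record subspace (A : (I -> C) -> Prop) : Prop := {
  subspace0 : A vzero;
  subspaceD : forall u v, A u -> A v -> A (vadd u v);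
  subspaceZ : forall a u, A u -> A (vscal a u) }.

Record seminorm_on (A : (I -> C) -> Prop) (p : (I -> C) -> R) : Prop := {
  seminormD : forall u v, A u -> A v -> p (vadd u v) <= p u + p v;
  seminormZ : forall a u, A u -> p (vscal a u) = Cmod a * p u }.

Record sublinear_on (A : (I -> C) -> Prop) (p : (I -> C) -> R) : Prop := {
  sublinearD : forall u v, A u -> A v -> p (vadd u v) <= p u + p v;
  sublinearZ : forall r u, A u -> 0 <= r -> p (vscal (RtoC r) u) = r * p u }.

Record linear_on (A : (I -> C) -> Prop) (f : (I -> C) -> C) : Prop := {
  linearD : forall u v, A u -> A v -> f (vadd u v) = Cplus (f u) (f v);
  linearZ : forall a u, A u -> f (vscal a u) = Cmult a (f u) }.

End VectorSpace.

Ltac vext := apply functional_extensionality; intro; unfold vadd, vscal, vzero.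
Ltac vring := vext; apply injective_projections; simpl; ring.

Lemma seminorm_zero {I} {A : (I -> C) -> Prop} {p}
  (hA : subspace A) (hp : seminorm_on A p) : p vzero = 0.
Proof.
  replace (@vzero I) with (vscal (RtoC 0) (@vzero I)) by vring.
  rewrite (seminormZ hp) by exact (subspace0 hA). rewrite Cmod_0. ring.
Qed.

Lemma seminorm_sublinear {I} {A : (I -> C) -> Prop} {p} :
  seminorm_on A p -> sublinear_on A p.
Proof.
  intros hp. split; [exact (seminormD hp)|].
  intros r u Au hr. rewrite (seminormZ hp) by exact Au.
  rewrite Cmod_R, Rabs_pos_eq; auto.
Qed.

Lemma seminorm_on_scal {I} {A : (I -> C) -> Prop} {p} (hp : seminorm_on A p) c :
  0 <= c -> seminorm_on A (fun u => c * p u).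
Proof.
  intros hc. split.
  - intros u v Au Av. rewrite <- Rmult_plus_distr_l.
    apply Rmult_le_compat_l; [exact hc | exact (seminormD hp _ _ Au Av)].
  - intros a u Au. rewrite (seminormZ hp) by exact Au. ring.
Qed.

Section RealHahnBanach.
Context {I : Type}.
Variables (A D : (I -> C) -> Prop) (p g : (I -> C) -> R).
Hypotheses (hA : subspace A) (hD : subspace D) (hDA : forall u, D u -> A u)
  (hp : sublinear_on A p)
  (hgD : forall u v, D u -> D v -> g (vadd u v) = g u + g v)
  (hgZ : forall r u, D u -> g (vscal (RtoC r) u) = r * g u)
  (hgp : forall u, D u -> g u <= p u).

Record dominated_extension (G : (I -> C) * R -> Prop) : Prop := {
  ext_functional : forall x a b, G (x, a) -> G (x, b) -> a = b;
  ext_dom : forall x a, G (x, a) -> A x;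
  ext_add : forall x a y b, G (x, a) -> G (y, b) -> G (vadd x y, a + b);
  ext_scal : forall r x a, G (x, a) -> G (vscal (RtoC r) x, r * a);
  ext_le : forall x a, G (x, a) -> a <= p x;
  ext_graph : forall x, D x -> G (x, g x) }.

Definition graph_g (z : (I -> C) * R) : Prop := D (fst z) /\ snd z = g (fst z).

Lemma dominated_extension_graph_g : dominated_extension graph_g.
Proof.
  unfold graph_g; split; simpl.
  - intros x a b [_ ->] [_ ->]; reflexivity.
  - intros x a [Dx _]; auto.
  - intros x a y b [Dx ->] [Dy ->]; split; [apply (subspaceD hD) | symmetry]; auto.
  - intros r x a [Dx ->]; split; [apply (subspaceZ hD) | symmetry]; auto.
  - intros x a [Dx ->]; auto.
  - split; auto.
Qed.

Section Chain.
Variable F : ((I -> C) * R -> Prop) -> Prop.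
Hypothesis hF : forall G, F G -> dominated_extension (fun z => graph_g z \/ G z).
Hypothesis hFtot : forall G H, F G -> F H ->
  (forall z, G z -> H z) \/ (forall z, H z -> G z).

Let U z := graph_g z \/ exists2 G, F G & G z.

Lemma chain_common_extension z1 z2 : U z1 -> U z2 ->
  exists H, dominated_extension H /\ (forall z, H z -> U z) /\ H z1 /\ H z2.
Proof.
  assert (member : forall G, F G -> forall z, graph_g z \/ G z -> U z).
  { intros G FG z [hz|hz]; [left | right; exists G]; auto. }
  intros [h1|[G1 F1 h1]] [h2|[G2 F2 h2]].
  - exists graph_g. split; [exact dominated_extension_graph_g|].
    split; [intros z hz; left; exact hz | auto].
  - exists (fun z => graph_g z \/ G2 z). split; [exact (hF F2)|].
    split; [exact (member G2 F2) | auto].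
  - exists (fun z => graph_g z \/ G1 z). split; [exact (hF F1)|].
    split; [exact (member G1 F1) | auto].
  - destruct (hFtot F1 F2) as [s|s].
    + exists (fun z => graph_g z \/ G2 z). split; [exact (hF F2)|].
      split; [exact (member G2 F2) | auto].
    + exists (fun z => graph_g z \/ G1 z). split; [exact (hF F1)|].
      split; [exact (member G1 F1) | auto].
Qed.

Lemma dominated_extension_chain : dominated_extension U.
Proof.
  split.
  - intros x a b ha hb. destruct (chain_common_extension ha hb) as [H [hH [_ [h1 h2]]]].
    exact (ext_functional hH _ _ _ h1 h2).
  - intros x a ha. destruct (chain_common_extension ha ha) as [H [hH [_ [h1 _]]]].
    exact (ext_dom hH _ _ h1).
  - intros x a y b ha hb. destruct (chain_common_extension ha hb) as [H [hH [sub [h1 h2]]]].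
    exact (sub _ (ext_add hH _ _ _ _ h1 h2)).
  - intros r x a ha. destruct (chain_common_extension ha ha) as [H [hH [sub [h1 _]]]].
    exact (sub _ (ext_scal hH r _ _ h1)).
  - intros x a ha. destruct (chain_common_extension ha ha) as [H [hH [_ [h1 _]]]].
    exact (ext_le hH _ _ h1).
  - intros x Dx. left; split; auto.
Qed.

End Chain.

Section OneStepExtension.
Variable G : (I -> C) * R -> Prop.
Hypothesis hG : dominated_extension G.
Variable x0 : I -> C.
Hypotheses (hx0 : A x0) (hx0G : ~ exists a, G (x0, a)).

Lemma ext_zero : G (vzero, 0).
Proof.
  replace (vzero, 0) with (vscal (RtoC 0) (@vzero I), 0 * g vzero).
  - apply (ext_scal hG), (ext_graph hG), (subspace0 hD).
  - f_equal; [vext; ring | ring].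
Qed.

(* The constant c is squeezed between sup (a - p(s - x0)) and inf (p(s + x0) - a). *)
Lemma extension_constant : exists c, forall s a, G (s, a) ->
  a + c <= p (vadd s x0) /\ a - c <= p (vadd s (vscal (RtoC (-1)) x0)).
Proof.
  set (E := fun y => exists s a, G (s, a) /\ y = a - p (vadd s (vscal (RtoC (-1)) x0))).
  assert (key : forall s a s' a', G (s, a) -> G (s', a') ->
            a' - p (vadd s' (vscal (RtoC (-1)) x0)) <= p (vadd s x0) - a).
  { intros s a s' a' h h'.
    assert (A s /\ A s') as [As As'] by (split; eapply (ext_dom hG); eauto).
    assert (a + a' <= p (vadd s s')) by (apply (ext_le hG), (ext_add hG); auto).
    assert (p (vadd s s') <= p (vadd s x0) + p (vadd s' (vscal (RtoC (-1)) x0))).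
    { replace (vadd s s') with (vadd (vadd s x0) (vadd s' (vscal (RtoC (-1)) x0)))
        by vring.
      apply (sublinearD hp); apply (subspaceD hA); auto; apply (subspaceZ hA); auto. }
    lra. }
  assert (bE : bound E).
  { exists (p (vadd vzero x0) - 0). intros y [s [a [h ->]]]. apply key; auto using ext_zero. }
  assert (nE : exists y, E y).
  { exists (0 - p (vadd vzero (vscal (RtoC (-1)) x0))), vzero, 0. split; auto using ext_zero. }
  destruct (completeness E bE nE) as [c [ub lub]].
  exists c. intros s a h. split.
  - enough (c <= p (vadd s x0) - a) by lra.
    apply lub. intros y [s' [a' [h' ->]]]. apply key; auto.
  - enough (a - p (vadd s (vscal (RtoC (-1)) x0)) <= c) by lra.
    apply ub. exists s, a; auto.
Qed.

Variable c : R.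
Hypothesis hc : forall s a, G (s, a) ->
  a + c <= p (vadd s x0) /\ a - c <= p (vadd s (vscal (RtoC (-1)) x0)).

Definition graph_extend (z : (I -> C) * R) : Prop :=
  exists s a r, G (s, a) /\ z = (vadd s (vscal (RtoC r) x0), a + r * c).

Lemma graph_extend_sub z : G z -> graph_extend z.
Proof.
  destruct z as [x a]. intros h. exists x, a, 0. split; auto.
  f_equal; [vring | ring].
Qed.

Lemma graph_extend_x0 : graph_extend (x0, c).
Proof.
  exists vzero, 0, 1. split; [exact ext_zero|].
  f_equal; [vring | ring].
Qed.

(* If r <> r', then x0 = (s - s') / (r' - r) would lie in the domain of G. *)
Lemma graph_extend_coord s a r s' a' r' : G (s, a) -> G (s', a') ->
  vadd s (vscal (RtoC r) x0) = vadd s' (vscal (RtoC r') x0) -> r = r' /\ s = s'.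
Proof.
  intros h h' e.
  assert (ei : forall i, s i = Cplus (s' i) (Cmult (RtoC (r' - r)) (x0 i))).
  { intro i. apply (f_equal (fun w => w i)) in e. unfold vadd, vscal in e.
    rewrite RtoC_minus.
    replace (s i) with (Cminus (Cplus (s i) (Cmult (RtoC r) (x0 i))) (Cmult (RtoC r) (x0 i)))
      by ring.
    rewrite e. ring. }
  destruct (Req_dec r r') as [<-|nr].
  - split; auto. apply functional_extensionality; intro i. rewrite ei, Rminus_diag. ring.
  - exfalso. apply hx0G.
    exists (/ (r' - r) * (a + -1 * a')).
    replace x0 with (vscal (RtoC (/ (r' - r))) (vadd s (vscal (RtoC (-1)) s'))).
    + apply (ext_scal hG), (ext_add hG); auto. apply (ext_scal hG); auto.
    + assert (nz : RtoC (r' - r) <> RtoC 0) by (intro z; apply RtoC_inj in z; lra).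
      vext. rewrite ei, RtoC_inv by lra.
      field. exact nz.
Qed.

Lemma graph_extend_le_scaled t sgn s a : 0 < t -> G (s, a) ->
  / t * a + sgn * c <= p (vadd (vscal (RtoC (/ t)) s) (vscal (RtoC sgn) x0)) ->
  a + t * sgn * c <= p (vadd s (vscal (RtoC (t * sgn)) x0)).
Proof.
  intros ht h le.
  replace (vadd s (vscal (RtoC (t * sgn)) x0))
    with (vscal (RtoC t) (vadd (vscal (RtoC (/ t)) s) (vscal (RtoC sgn) x0))).
  - rewrite (sublinearZ hp); [| | lra].
    + apply Rmult_le_compat_l with (r := t) in le; [|lra].
      replace (t * (/ t * a + sgn * c)) with (a + t * sgn * c) in le by (field; lra). exact le.
    + apply (subspaceD hA); apply (subspaceZ hA); [eapply (ext_dom hG); eauto | exact hx0].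
  - vext. rewrite RtoC_mult, RtoC_inv by lra. field.
    intro z; apply RtoC_inj in z; lra.
Qed.

Lemma graph_extend_le s a r : G (s, a) -> a + r * c <= p (vadd s (vscal (RtoC r) x0)).
Proof.
  intros h. destruct (Rtotal_order r 0) as [neg|[->|pos]].
  - destruct (hc (ext_scal hG (/ - r) _ _ h)) as [_ le].
    assert (H := graph_extend_le_scaled (sgn := -1) (ltac:(lra) : 0 < - r) h).
    replace (- r * -1) with r in H by ring. apply H. lra.
  - replace (vadd s (vscal (RtoC 0) x0)) with s by vring.
    rewrite Rmult_0_l, Rplus_0_r. exact (ext_le hG _ _ h).
  - destruct (hc (ext_scal hG (/ r) _ _ h)) as [le _].
    assert (H := graph_extend_le_scaled (sgn := 1) pos h).
    replace (r * 1) with r in H by ring. apply H.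
    replace (vadd (vscal (RtoC (/ r)) s) (vscal (RtoC 1) x0)) with (vadd (vscal (RtoC (/ r)) s) x0)
      by (vext; ring). lra.
Qed.

Lemma dominated_extension_extend : dominated_extension graph_extend.
Proof.
  split.
  - intros x a b [s [a1 [r [h1 e1]]]] [s' [a2 [r' [h2 e2]]]].
    injection e1 as ex1 ->. injection e2 as ex2 ->.
    destruct (graph_extend_coord h1 h2 (eq_trans (eq_sym ex1) ex2)) as [<- <-].
    rewrite (ext_functional hG _ _ _ h1 h2). reflexivity.
  - intros x a [s [a1 [r [h1 e1]]]]. injection e1 as -> ->.
    apply (subspaceD hA); [exact (ext_dom hG _ _ h1) | exact (subspaceZ hA _ _ hx0)].
  - intros x a y b [s [a1 [r [h1 e1]]]] [s' [a2 [r' [h2 e2]]]].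
    injection e1 as -> ->. injection e2 as -> ->.
    exists (vadd s s'), (a1 + a2), (r + r'). split; [exact (ext_add hG _ _ _ _ h1 h2)|].
    f_equal; [vring | ring].
  - intros t x a [s [a1 [r [h1 e1]]]]. injection e1 as -> ->.
    exists (vscal (RtoC t) s), (t * a1), (t * r). split; [exact (ext_scal hG t _ _ h1)|].
    f_equal; [vring | ring].
  - intros x a [s [a1 [r [h1 e1]]]]. injection e1 as -> ->. exact (graph_extend_le r h1).
  - intros x Dx. exact (graph_extend_sub (ext_graph hG Dx)).
Qed.

End OneStepExtension.

(* Zorn is applied to the graphs G such that graph_g ∪ G is an extension, so that
   the empty chain is admissible. *)
Lemma dominated_extension_total :
  exists G, dominated_extension G /\ forall x, A x -> exists a, G (x, a).
Proof.
  destruct (classical_sets.Zorn_bigcup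
              (P := fun G => dominated_extension (fun z => graph_g z \/ G z)))
    as [M [hM maxM]].
  { intros F hF hFtot. apply dominated_extension_chain; [exact hF|].
    intros G H FG FH. destruct (hFtot G H FG FH); [left | right]; auto. }
  exists (fun z => graph_g z \/ M z). split; [exact hM|].
  intros x Ax. apply NNPP; intro nx.
  destruct (extension_constant hM Ax) as [c hc].
  set (G' := graph_extend (fun z => graph_g z \/ M z) x c).
  apply (maxM G').
  - split.
    + intros z hz. apply graph_extend_sub. right; exact hz.
    + intro sub. apply nx. exists c. right. apply sub. exact (graph_extend_x0 hM x c).
  - replace (fun z => graph_g z \/ G' z) with G'.
    + exact (dominated_extension_extend hM Ax nx hc).
    + apply functional_extensionality; intro z; apply propositional_extensionality.
      split; [intro h; right; exact h |]. intros [h|h]; [apply graph_extend_sub; left |]; exact h.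
Qed.

Lemma real_hahn_banach : exists U : (I -> C) -> R,
  (forall u v, A u -> A v -> U (vadd u v) = U u + U v) /\
  (forall r u, A u -> U (vscal (RtoC r) u) = r * U u) /\
  (forall u, D u -> U u = g u) /\
  (forall u, A u -> U u <= p u).
Proof.
  destruct dominated_extension_total as [G [hG total]].
  set (U x := epsilon (inhabits 0) (fun a => G (x, a))).
  assert (hU : forall x a, G (x, a) -> U x = a).
  { intros x a h.
    exact (ext_functional hG _ _ _ (epsilon_spec _ (fun b => G (x, b)) (ex_intro _ a h)) h). }
  exists U. split; [|split; [|split]].
  - intros u v Au Av. destruct (total u Au) as [a ha], (total v Av) as [b hb].
    rewrite (hU _ _ ha), (hU _ _ hb). exact (hU _ _ (ext_add hG _ _ _ _ ha hb)).
  - intros r u Au. destruct (total u Au) as [a ha].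
    rewrite (hU _ _ ha). exact (hU _ _ (ext_scal hG r _ _ ha)).
  - intros u Du. exact (hU _ _ (ext_graph hG Du)).
  - intros u Au. destruct (total u Au) as [a ha].
    rewrite (hU _ _ ha). exact (ext_le hG _ _ ha).
Qed.

End RealHahnBanach.

Lemma Cmod_rotation (z : C) : exists a, Cmod a = 1 /\ Cmult a z = RtoC (Cmod z).
Proof.
  destruct (Ceq_dec z (RtoC 0)) as [->|nz].
  - exists (RtoC 1). split; [apply Cmod_1 | rewrite Cmod_0; ring].
  - assert (hz : 0 < Cmod z) by (apply Cmod_gt_0; exact nz).
    exists (Cmult (Cconj z) (RtoC (/ Cmod z))). split.
    + rewrite Cmod_mult, Cmod_conj, Cmod_R, Rabs_pos_eq;
        [field; lra | left; apply Rinv_0_lt_compat; lra].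
    + transitivity (Cmult (Cmult z (Cconj z)) (RtoC (/ Cmod z))); [ring|].
      rewrite <- Cmod2_conj. apply injective_projections; simpl; field; lra.
Qed.

(* The real part of F is a real Hahn-Banach extension U, and F u = U u - i U (i u). *)
Theorem hahn_banach {I} (A D : (I -> C) -> Prop) p f :
  subspace A -> subspace D -> (forall u, D u -> A u) -> seminorm_on A p ->
  linear_on D f -> (forall u, D u -> Cmod (f u) <= p u) ->
  exists F, linear_on A F /\ (forall u, D u -> F u = f u) /\
    (forall u, A u -> Cmod (F u) <= p u).
Proof.
  intros hA hD hDA hp hf hfp.
  assert (hgD : forall u v, D u -> D v -> Re (f (vadd u v)) = Re (f u) + Re (f v))
    by (intros u v Du Dv; rewrite (linearD hf) by assumption; reflexivity).
  assert (hgZ : forall r u, D u -> Re (f (vscal (RtoC r) u)) = r * Re (f u))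
    by (intros r u Du; rewrite (linearZ hf) by assumption; apply re_scal_l).
  assert (hgp : forall u, D u -> Re (f u) <= p u).
  { intros u Du. eapply Rle_trans; [apply Rle_abs|].
    eapply Rle_trans; [apply re_le_Cmod | exact (hfp u Du)]. }
  destruct (@real_hahn_banach I A D p _ hA hD hDA (seminorm_sublinear hp) hgD hgZ hgp)
    as [U [UD [UZ [Uext Ule]]]].
  set (F u := (U u, - U (vscal Ci u)) : C).
  assert (FZ : forall a u, A u -> F (vscal a u) = Cmult a (F u)).
  { intros [ar ai] u Au.
    assert (e1 : vscal (ar, ai) u = vadd (vscal (RtoC ar) u) (vscal (RtoC ai) (vscal Ci u)))
      by vring.
    assert (e2 : vscal Ci (vscal (ar, ai) u)
                 = vadd (vscal (RtoC ar) (vscal Ci u)) (vscal (RtoC (- ai)) u))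
      by vring.
    assert (Aiu : A (vscal Ci u)) by exact (subspaceZ hA _ _ Au).
    unfold F. rewrite e2, e1.
    rewrite !UD, !UZ by (try apply (subspaceZ hA); assumption).
    apply injective_projections; simpl; ring. }
  exists F. split; [split|split].
  - intros u v Au Av. unfold F.
    replace (vscal Ci (vadd u v)) with (vadd (vscal Ci u) (vscal Ci v)) by vring.
    rewrite !UD by (try apply (subspaceZ hA); assumption).
    apply injective_projections; simpl; ring.
  - exact FZ.
  - intros u Du. unfold F.
    rewrite !Uext by (try apply (subspaceZ hD); assumption).
    rewrite (linearZ hf) by assumption.
    unfold Re. apply injective_projections; simpl; ring.
  - intros u Au. destruct (Cmod_rotation (F u)) as [a [ha1 ha]].
    assert (e : U (vscal a u) = Cmod (F u))
      by (change (U (vscal a u)) with (fst (F (vscal a u))); rewrite FZ, ha; auto).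
    rewrite <- e, <- (Rmult_1_l (p u)), <- ha1, <- (seminormZ hp) by assumption.
    apply Ule, (subspaceZ hA), Au.
Qed.

(** * Duals of finite intersections *)

Lemma sum_f_R0_ge_term (a : nat -> R) k i :
  (forall j, 0 <= a j) -> (i <= k)%nat -> a i <= sum_f_R0 a k.
Proof.
  intros ha hi. induction k as [|k IH]; simpl.
  - replace i with 0%nat by lia. lra.
  - destruct (Nat.eq_dec i (S k)) as [->|ne].
    + assert (0 <= sum_f_R0 a k) by (apply cond_pos_sum; exact ha). lra.
    + assert (a i <= sum_f_R0 a k) by (apply IH; lia). specialize (ha (S k)). lra.
Qed.

Lemma sum_f_R0_single (a : nat -> R) k i :
  (i <= k)%nat -> (forall j, j <> i -> a j = 0) -> sum_f_R0 a k = a i.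
Proof.
  intros hi ha. induction k as [|k IH]; simpl.
  - f_equal; lia.
  - destruct (Nat.eq_dec i (S k)) as [->|ne].
    + rewrite (sum_eq _ (fun _ => 0)), sum_cte by (intros j hj; apply ha; lia). ring.
    + rewrite IH, (ha (S k)) by lia. ring.
Qed.

Lemma nat_bound_upto (h : nat -> nat) k : exists K, forall j, (j <= k)%nat -> (h j <= K)%nat.
Proof.
  induction k as [|k [K hK]].
  - exists (h 0%nat). intros j hj. replace j with 0%nat by lia. lia.
  - exists (Nat.max K (h (S k))). intros j hj.
    destruct (Nat.eq_dec j (S k)) as [->|ne]; [lia|]. specialize (hK j). lia.
Qed.

Definition row (w : nat * nat -> C) (i : nat) : seqC := fun j => w (i, j).

Definition row_embed (i : nat) (u : seqC) : nat * nat -> C :=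
  fun ij => if Nat.eqb (fst ij) i then u (snd ij) else RtoC 0.

Definition diag_upto (m : nat) (y : seqC) : nat * nat -> C :=
  fun ij => if Nat.leb (fst ij) m then y (snd ij) else RtoC 0.

Lemma row_embed_eq i u : row (row_embed i u) i = u.
Proof. unfold row, row_embed; simpl. rewrite Nat.eqb_refl. reflexivity. Qed.

Lemma row_embed_neq i j u : j <> i -> row (row_embed i u) j = seq0.
Proof.
  intros ne. apply functional_extensionality; intro l. unfold row, row_embed; simpl.
  destruct (Nat.eqb_spec j i); [lia | reflexivity].
Qed.

Lemma row_diag_upto_le m y i : (i <= m)%nat -> row (diag_upto m y) i = y.
Proof.
  intros hi. apply functional_extensionality; intro l. unfold row, diag_upto; simpl.
  destruct (Nat.leb_spec i m); [reflexivity | lia].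
Qed.

Lemma row_diag_upto_gt m y i : (m < i)%nat -> row (diag_upto m y) i = seq0.
Proof.
  intros hi. apply functional_extensionality; intro l. unfold row, diag_upto; simpl.
  destruct (Nat.leb_spec i m); [lia | reflexivity].
Qed.

Lemma diag_upto_0 y : diag_upto 0 y = row_embed 0 y.
Proof.
  apply functional_extensionality; intros [i j]; unfold diag_upto, row_embed; simpl.
  destruct i; reflexivity.
Qed.

Lemma diag_upto_S m y : diag_upto (S m) y = vadd (diag_upto m y) (row_embed (S m) y).
Proof.
  apply functional_extensionality; intros [i j]; unfold vadd, diag_upto, row_embed; simpl.
  destruct (Nat.leb_spec i m), (Nat.eqb_spec i (S m)), (Nat.leb_spec i (S m));
    try lia; ring.
Qed.

Lemma row_embed_add i u v : row_embed i (seq_add u v) = vadd (row_embed i u) (row_embed i v).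
Proof.
  apply functional_extensionality; intros [i' j]; unfold vadd, row_embed, seq_add; simpl.
  destruct (Nat.eqb i' i); [reflexivity | ring].
Qed.

Lemma row_embed_scal i a u : row_embed i (seq_scal a u) = vscal a (row_embed i u).
Proof.
  apply functional_extensionality; intros [i' j]; unfold vscal, row_embed, seq_scal; simpl.
  destruct (Nat.eqb i' i); [reflexivity | ring].
Qed.

Lemma diag_upto_add m y y' : diag_upto m (seq_add y y') = vadd (diag_upto m y) (diag_upto m y').
Proof.
  apply functional_extensionality; intros [i j]; unfold vadd, diag_upto, seq_add; simpl.
  destruct (Nat.leb i m); [reflexivity | ring].
Qed.

Lemma diag_upto_scal m a y : diag_upto m (seq_scal a y) = vscal a (diag_upto m y).
Proof.
  apply functional_extensionality; intros [i j]; unfold vscal, diag_upto, seq_scal; simpl.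
  destruct (Nat.leb i m); [reflexivity | ring].
Qed.

Section FiniteIntersection.
Variables (Z : nat -> seqC -> Prop) (s : nat -> seqC -> R) (k : nat).
Hypotheses (hZ : forall i, subspace (Z i)) (hs : forall i, seminorm_on (Z i) (s i)).

(* The product of the Z i, i <= k, as functions on nat * nat read row by row;
   rows beyond k are unconstrained. *)
Definition in_blocks (w : nat * nat -> C) : Prop := forall i, (i <= k)%nat -> Z i (row w i).

Definition block_seminorm (w : nat * nat -> C) : R := sum_f_R0 (fun i => s i (row w i)) k.

Lemma in_blocks_subspace : subspace in_blocks.
Proof.
  split.
  - intros i _. exact (subspace0 (hZ i)).
  - intros u v hu hv i hi. exact (subspaceD (hZ i) _ _ (hu i hi) (hv i hi)).
  - intros a u hu i hi. exact (subspaceZ (hZ i) a _ (hu i hi)).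
Qed.

Lemma block_seminorm_on : seminorm_on in_blocks block_seminorm.
Proof.
  split.
  - intros u v hu hv. unfold block_seminorm. rewrite <- plus_sum.
    apply sum_Rle. intros i hi. exact (seminormD (hs i) _ _ (hu i hi) (hv i hi)).
  - intros a u hu. unfold block_seminorm. rewrite scal_sum.
    apply sum_eq. intros i hi. change (row (vscal a u) i) with (vscal a (row u i)).
    rewrite (seminormZ (hs i)) by exact (hu i hi). ring.
Qed.

Lemma in_blocks_row_embed i u : ((i <= k)%nat -> Z i u) -> in_blocks (row_embed i u).
Proof.
  intros hu j hj. destruct (Nat.eq_dec j i) as [->|ne].
  - rewrite row_embed_eq. exact (hu hj).
  - rewrite row_embed_neq by exact ne. exact (subspace0 (hZ j)).
Qed.

Lemma in_blocks_diag_upto m y : (forall i, (i <= k)%nat -> Z i y) -> in_blocks (diag_upto m y).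
Proof.
  intros hy i hi. destruct (le_lt_dec i m).
  - rewrite row_diag_upto_le by assumption. exact (hy i hi).
  - rewrite row_diag_upto_gt by assumption. exact (subspace0 (hZ i)).
Qed.

Lemma block_seminorm_row_embed i u : (i <= k)%nat -> block_seminorm (row_embed i u) = s i u.
Proof.
  intros hi. unfold block_seminorm. rewrite (sum_f_R0_single _ hi).
  - rewrite row_embed_eq. reflexivity.
  - intros j ne. rewrite row_embed_neq by exact ne. exact (seminorm_zero (hZ j) (hs j)).
Qed.

Lemma block_seminorm_diag_upto y :
  block_seminorm (diag_upto k y) = sum_f_R0 (fun i => s i y) k.
Proof.
  apply sum_eq. intros i hi. rewrite row_diag_upto_le by exact hi. reflexivity.
Qed.

Lemma linear_diag_upto_sum F m y : linear_on in_blocks F ->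
  (forall i, (i <= k)%nat -> Z i y) ->
  F (diag_upto m y) = sum_n (fun i => F (row_embed i y)) m.
Proof.
  intros hF hy. induction m as [|m IH].
  - rewrite diag_upto_0, sum_O. reflexivity.
  - rewrite diag_upto_S, sum_Sn, <- IH.
    apply (linearD hF); [apply in_blocks_diag_upto | apply in_blocks_row_embed]; auto.
Qed.

(* Hahn-Banach on the product of the blocks, where Y sits diagonally. *)
Theorem finite_intersection_dual (Y : seqC -> Prop) f :
  subspace Y -> (forall y i, Y y -> (i <= k)%nat -> Z i y) -> linear_on Y f ->
  (forall y, Y y -> Cmod (f y) <= sum_f_R0 (fun i => s i y) k) ->
  exists g : nat -> seqC -> C,
    (forall i, (i <= k)%nat ->
       linear_on (Z i) (g i) /\ forall u, Z i u -> Cmod (g i u) <= s i u) /\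
    (forall y, Y y -> f y = sum_n (fun i => g i y) k).
Proof.
  intros hY hYZ hf hfs.
  set (D w := exists y, Y y /\ w = diag_upto k y).
  assert (hD : subspace D).
  { split.
    - exists seq0. split; [exact (subspace0 hY)|].
      apply functional_extensionality; intros [i j]; unfold diag_upto; simpl.
      destruct (Nat.leb i k); reflexivity.
    - intros u v [y [hy ->]] [y' [hy' ->]]. exists (seq_add y y').
      split; [exact (subspaceD hY _ _ hy hy') | symmetry; apply diag_upto_add].
    - intros a u [y [hy ->]]. exists (seq_scal a y).
      split; [exact (subspaceZ hY a _ hy) | symmetry; apply diag_upto_scal]. }
  assert (hDA : forall w, D w -> in_blocks w).
  { intros w [y [hy ->]]. apply in_blocks_diag_upto; auto. }
  assert (hphi : linear_on D (fun w => f (row w 0))).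
  { split.
    - intros u v [y [hy ->]] [y' [hy' ->]].
      rewrite <- diag_upto_add, !row_diag_upto_le by lia. exact (linearD hf _ _ hy hy').
    - intros a u [y [hy ->]].
      rewrite <- diag_upto_scal, !row_diag_upto_le by lia. exact (linearZ hf a _ hy). }
  assert (hphis : forall w, D w -> Cmod (f (row w 0)) <= block_seminorm w).
  { intros w [y [hy ->]]. rewrite block_seminorm_diag_upto, row_diag_upto_le by lia.
    exact (hfs y hy). }
  destruct (hahn_banach in_blocks_subspace hD hDA block_seminorm_on hphi hphis)
    as [F [hF [Fext Fs]]].
  exists (fun i u => F (row_embed i u)). split.
  - intros i hi. split; [split|].
    + intros u v hu hv. rewrite row_embed_add.
      apply (linearD hF); apply in_blocks_row_embed; auto.
    + intros a u hu. rewrite row_embed_scal.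
      apply (linearZ hF); apply in_blocks_row_embed; auto.
    + intros u hu. rewrite <- (block_seminorm_row_embed u hi).
      apply Fs, in_blocks_row_embed; auto.
  - intros y hy. rewrite <- (linear_diag_upto_sum k hF) by auto.
    rewrite Fext by (exists y; auto). rewrite row_diag_upto_le by lia. reflexivity.
Qed.

End FiniteIntersection.

(** * Intersections of FK-spaces *)

Lemma is_FK_subspace X : is_FK X -> subspace (mem X).
Proof. intros [h0 [hD [hZ _]]]. split; assumption. Qed.

Lemma is_FK_seminorm X k : is_FK X -> seminorm_on (mem X) (sn X k).
Proof. intros [_ [_ [_ [_ [hD [hZ _]]]]]]. split; auto. Qed.

Lemma is_FK_sn_ge0 {X} (hX : is_FK X) k {x} : mem X x -> 0 <= sn X k x.
Proof. destruct hX as [_ [_ [_ [h _]]]]. apply h. Qed.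

Lemma sn_upto_ge0 {X} (hX : is_FK X) k {x} : mem X x -> 0 <= sn_upto X k x.
Proof. intros hx. apply cond_pos_sum. intro j. exact (is_FK_sn_ge0 hX j hx). Qed.

Lemma finite_support_mem (M : seqC -> Prop) : subspace M -> (forall j, M (delta j)) ->
  forall K z, (forall j, (K <= j)%nat -> z j = RtoC 0) -> M z.
Proof.
  intros hM hdelta K. induction K as [|K IH]; intros z hz.
  - replace z with (@vzero nat) by (vext; rewrite hz by lia; reflexivity).
    exact (subspace0 hM).
  - replace z with (vadd (trunc K z) (vscal (z K) (delta K))).
    + apply (subspaceD hM); [|apply (subspaceZ hM), hdelta].
      apply IH. intros j hj. unfold trunc. destruct (Nat.ltb_spec j K); [lia | reflexivity].
    + vext. unfold trunc, delta.
      destruct (Nat.ltb_spec x K), (Nat.eqb_spec x K); subst; try lia; try ring.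
      rewrite (hz x) by lia. ring.
Qed.

Lemma Tn_finite_support p q m x j : (q m <= j)%nat -> Defs.Tn p q m x j = RtoC 0.
Proof.
  intros hj. unfold Defs.Tn.
  rewrite (sum_n_m_ext_loc _ (fun _ => zero)), sum_n_m_const_zero.
  - apply injective_projections; simpl; ring.
  - intros l hl. unfold trunc. destruct (Nat.ltb_spec j l); [lia | reflexivity].
Qed.

Definition cvgC (z : nat -> C) (l : C) : Prop := is_lim_seq (fun m => Cmod (Cminus (z m) l)) 0.

Lemma cvgC_plus a b la lb :
  cvgC a la -> cvgC b lb -> cvgC (fun m => Cplus (a m) (b m)) (Cplus la lb).
Proof.
  unfold cvgC. intros ha hb.
  apply is_lim_seq_le_le with (u := fun _ => 0)
    (w := fun m => Cmod (Cminus (a m) la) + Cmod (Cminus (b m) lb)).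
  - intro m. split; [apply Cmod_ge_0|].
    replace (Cminus (Cplus (a m) (b m)) (Cplus la lb))
      with (Cplus (Cminus (a m) la) (Cminus (b m) lb)) by ring.
    apply Cmod_triangle.
  - apply is_lim_seq_const.
  - replace (Finite 0) with (Finite (0 + 0)) by (f_equal; ring).
    apply is_lim_seq_plus'; assumption.
Qed.

Lemma sum_n_O_fun (z : nat -> nat -> C) : (fun m => sum_n (fun i => z i m) 0) = z 0%nat.
Proof. apply functional_extensionality; intro m. rewrite sum_O. reflexivity. Qed.

Lemma sum_n_Sn_fun (z : nat -> nat -> C) k :
  (fun m => sum_n (fun i => z i m) (S k)) = (fun m => Cplus (sum_n (fun i => z i m) k) (z (S k) m)).
Proof. apply functional_extensionality; intro m. rewrite sum_Sn. reflexivity. Qed.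

Lemma cvgC_sum_n (z : nat -> nat -> C) l k :
  (forall i, (i <= k)%nat -> cvgC (z i) (l i)) ->
  cvgC (fun m => sum_n (fun i => z i m) k) (sum_n l k).
Proof.
  induction k as [|k IH]; intros h.
  - rewrite sum_n_O_fun, sum_O. exact (h 0%nat (le_n 0)).
  - rewrite sum_n_Sn_fun, sum_Sn. apply cvgC_plus; [apply IH|]; auto.
Qed.

Lemma ex_cvgC_sum_n (z : nat -> nat -> C) k :
  (forall i, (i <= k)%nat -> exists l, cvgC (z i) l) ->
  exists l, cvgC (fun m => sum_n (fun i => z i m) k) l.
Proof.
  induction k as [|k IH]; intros h.
  - rewrite sum_n_O_fun. exact (h 0%nat (le_n 0)).
  - destruct IH as [l hl]; [auto|]. destruct (h (S k)) as [l' hl']; [auto|].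
    exists (Cplus l l'). rewrite sum_n_Sn_fun. apply cvgC_plus; assumption.
Qed.

Lemma bounded_sum_n (z : nat -> nat -> C) k :
  (forall i, (i <= k)%nat -> exists M, forall m, Cmod (z i m) <= M) ->
  exists M, forall m, Cmod (sum_n (fun i => z i m) k) <= M.
Proof.
  induction k as [|k IH]; intros h.
  - destruct (h 0%nat (le_n 0)) as [M hM]. exists M. intro m. rewrite sum_O. apply hM.
  - destruct IH as [M hM]; [auto|]. destruct (h (S k)) as [M' hM']; [auto|].
    exists (M + M'). intro m. rewrite sum_Sn.
    eapply Rle_trans; [apply Cmod_triangle|]. specialize (hM m); specialize (hM' m); simpl; lra.
Qed.

Lemma sn_Yint_pair (X : nat -> SeqSpace) n j x :
  sn (Yint X) (Cantor.to_nat (n, j)) x = sn (X n) j x.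
Proof. cbn [sn Yint]. rewrite Cantor.cancel_of_to. reflexivity. Qed.

Lemma DS_Yint (X : nat -> SeqSpace) p q x : DS p q (Yint X) x <-> (forall n, DS p q (X n) x).
Proof.
  split.
  - intros [hx hlim] n. split; [exact (hx n)|]. intro j.
    specialize (hlim (Cantor.to_nat (n, j))).
    eapply is_lim_seq_ext; [intro m; apply sn_Yint_pair | exact hlim].
  - intros h. split; [intro n; apply h|]. intro i. apply h.
Qed.

Section Intersection.
Variable X : nat -> SeqSpace.
Hypothesis hFK : forall n, is_FK (X n).

Lemma Yint_subspace : subspace (mem (Yint X)).
Proof.
  split.
  - intro n. exact (subspace0 (is_FK_subspace (hFK n))).
  - intros u v hu hv n. exact (subspaceD (is_FK_subspace (hFK n)) _ _ (hu n) (hv n)).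
  - intros a u hu n. exact (subspaceZ (is_FK_subspace (hFK n)) a _ (hu n)).
Qed.

Lemma dual_Yint_of_dual n f : dual (X n) f -> dual (Yint X) f.
Proof.
  intros [fD [fZ [k [M hb]]]].
  split; [intros x y hx hy; exact (fD x y (hx n) (hy n)) |].
  split; [intros a x hx; exact (fZ a x (hx n)) |].
  destruct (nat_bound_upto (fun j => Cantor.to_nat (n, j)) k) as [K hK].
  exists K, (Rmax M 0 * INR (S k)). intros x hx.
  assert (hsn : sn_upto (X n) k x <= INR (S k) * sn_upto (Yint X) K x).
  { unfold sn_upto at 1. rewrite Rmult_comm, <- sum_cte. apply sum_Rle. intros j hj.
    rewrite <- sn_Yint_pair. apply (sum_f_R0_ge_term (fun i => sn (Yint X) i x)); [|auto].
    intro i. exact (is_FK_sn_ge0 (hFK _) _ (hx _)). }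
  assert (h0 := sn_upto_ge0 (hFK n) k (hx n)).
  eapply Rle_trans; [exact (hb x (hx n))|].
  rewrite Rmult_assoc. eapply Rle_trans; [apply Rmult_le_compat_r; [exact h0 | apply Rmax_l]|].
  apply Rmult_le_compat_l; [apply Rmax_r | exact hsn].
Qed.

Lemma dual_Yint_decomp f : dual (Yint X) f ->
  exists k (N : nat -> nat) (g : nat -> seqC -> C),
    (forall i, (i <= k)%nat -> dual (X (N i)) (g i)) /\
    (forall y, mem (Yint X) y -> f y = sum_n (fun i => g i y) k).
Proof.
  intros [fD [fZ [k [M hb]]]].
  set (M0 := Rmax M 0). set (N i := fst (Cantor.of_nat i)).
  set (s i u := M0 * sn (X (N i)) (snd (Cantor.of_nat i)) u).
  assert (hZ : forall i, subspace (mem (X (N i)))) by (intro i; exact (is_FK_subspace (hFK _))).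
  assert (hs : forall i, seminorm_on (mem (X (N i))) (s i)).
  { intro i. apply seminorm_on_scal; [exact (is_FK_seminorm _ (hFK _)) | apply Rmax_r]. }
  assert (hfs : forall y, mem (Yint X) y -> Cmod (f y) <= sum_f_R0 (fun i => s i y) k).
  { intros y hy. eapply Rle_trans; [exact (hb y hy)|].
    unfold sn_upto. rewrite scal_sum.
    apply sum_Rle. intros i _. unfold s. cbn [sn Yint]. rewrite Rmult_comm.
    apply Rmult_le_compat_r; [|apply Rmax_l].
    exact (is_FK_sn_ge0 (hFK _) _ (hy _)). }
  destruct (finite_intersection_dual _ _ hZ hs Yint_subspace (fun y i hy _ => hy (N i))
              (Build_linear_on _ _ fD fZ) hfs) as [g [hg hfg]].
  - exists k, N, g. split; [|exact hfg].
    intros i hi. destruct (hg i hi) as [[gD gZ] gb].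
    split; [exact gD | split; [exact gZ|]].
    exists (snd (Cantor.of_nat i)), M0. intros u hu.
    eapply Rle_trans; [exact (gb u hu)|]. unfold s.
    apply Rmult_le_compat_l; [apply Rmax_r|].
    apply (sum_f_R0_ge_term (fun j => sn (X (N i)) j u)); [|lia].
    intro j. exact (is_FK_sn_ge0 (hFK _) j hu).
Qed.

Lemma weak_cvg_Yint (u : nat -> seqC) x :
  (forall m, mem (Yint X) (u m)) -> mem (Yint X) x ->
  (forall n f, dual (X n) f -> cvgC (fun m => f (u m)) (f x)) ->
  forall f, dual (Yint X) f -> cvgC (fun m => f (u m)) (f x).
Proof.
  intros hu hx h f hf. destruct (dual_Yint_decomp hf) as [k [N [g [hg hfg]]]].
  replace (fun m => f (u m)) with (fun m => sum_n (fun i => g i (u m)) k)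
    by (apply functional_extensionality; intro m; symmetry; apply hfg, hu).
  rewrite hfg by exact hx.
  apply (cvgC_sum_n (fun i m => g i (u m))). intros i hi. exact (h _ _ (hg i hi)).
Qed.

Lemma weak_ex_cvg_Yint (u : nat -> seqC) :
  (forall m, mem (Yint X) (u m)) ->
  (forall n f, dual (X n) f -> exists l, cvgC (fun m => f (u m)) l) ->
  forall f, dual (Yint X) f -> exists l, cvgC (fun m => f (u m)) l.
Proof.
  intros hu h f hf. destruct (dual_Yint_decomp hf) as [k [N [g [hg hfg]]]].
  replace (fun m => f (u m)) with (fun m => sum_n (fun i => g i (u m)) k)
    by (apply functional_extensionality; intro m; symmetry; apply hfg, hu).
  apply (ex_cvgC_sum_n (fun i m => g i (u m))). intros i hi. exact (h _ _ (hg i hi)).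
Qed.

Lemma weak_bounded_Yint (u : nat -> seqC) :
  (forall m, mem (Yint X) (u m)) ->
  (forall n f, dual (X n) f -> exists M, forall m, Cmod (f (u m)) <= M) ->
  forall f, dual (Yint X) f -> exists M, forall m, Cmod (f (u m)) <= M.
Proof.
  intros hu h f hf. destruct (dual_Yint_decomp hf) as [k [N [g [hg hfg]]]].
  destruct (bounded_sum_n (fun i m => g i (u m)) (k := k)) as [M hM].
  - intros i hi. exact (h _ _ (hg i hi)).
  - exists M. intro m. rewrite hfg by apply hu. apply hM.
Qed.

Hypothesis hphi : forall n j, mem (X n) (delta j).

Lemma Tn_mem_Yint p q m x : mem (Yint X) (Defs.Tn p q m x).
Proof.
  intro n. apply (finite_support_mem (K := q m) (is_FK_subspace (hFK n)) (hphi n)).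
  intros j hj. apply Tn_finite_support, hj.
Qed.

Lemma DW_Yint p q x : DW p q (Yint X) x <-> (forall n, DW p q (X n) x).
Proof.
  split.
  - intros [hx hw] n. split; [exact (hx n)|]. intros f hf. exact (hw f (dual_Yint_of_dual hf)).
  - intros h. assert (hx : mem (Yint X) x) by (intro n; apply h).
    split; [exact hx|].
    apply (weak_cvg_Yint (fun m => Defs.Tn p q m x)); [intro m; apply Tn_mem_Yint | exact hx |].
    intros n f hf. exact (proj2 (h n) f hf).
Qed.

Lemma DF_Yint p q x : DF p q (Yint X) x <-> (forall n, DF p q (X n) x).
Proof.
  split.
  - intros [hx hw] n. split; [exact (hx n)|]. intros f hf. exact (hw f (dual_Yint_of_dual hf)).
  - intros h. split; [intro n; apply h|].
    apply (weak_ex_cvg_Yint (fun m => Defs.Tn p q m x)); [intro m; apply Tn_mem_Yint|].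
    intros n f hf. exact (proj2 (h n) f hf).
Qed.

Lemma DB_Yint p q x : DB p q (Yint X) x <-> (forall n, DB p q (X n) x).
Proof.
  split.
  - intros [hx hw] n. split; [exact (hx n)|]. intros f hf. exact (hw f (dual_Yint_of_dual hf)).
  - intros h. split; [intro n; apply h|].
    apply (weak_bounded_Yint (fun m => Defs.Tn p q m x)); [intro m; apply Tn_mem_Yint|].
    intros n f hf. exact (proj2 (h n) f hf).
Qed.

End Intersection.

Theorem mainTheorem18 (X : nat -> SeqSpace) (p q : nat -> nat)
  (hpq : forall n, (p n < q n)%nat)
  (hq : forall M, exists N, forall n, (N <= n)%nat -> (M <= q n)%nat)
  (hFK : forall n, is_FK (X n))
  (hphi : forall n j, mem (X n) (delta j)) :
  (forall x, DS p q (Yint X) x <-> (forall n, DS p q (X n) x)) /\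
  (forall x, DW p q (Yint X) x <-> (forall n, DW p q (X n) x)) /\
  (forall x, DF p q (Yint X) x <-> (forall n, DF p q (X n) x)) /\
  (forall x, DB p q (Yint X) x <-> (forall n, DB p q (X n) x)).
Proof.
  split; [|split; [|split]]; intro x.
  - apply DS_Yint.
  - apply DW_Yint; assumption.
  - apply DF_Yint; assumption.
  - apply DB_Yint; assumption.
Qed.
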